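(* For every finite set $\Gamma$ and formula $A$ of the propositional language $\mathcal{L}_p$: (i) $\Gamma\vdash_{\mathbf{KPC}}A$ iff $\Gamma\vdash_{i\mathbf{STL}}A$ iff $i\mathbf{ST}\vDash\Gamma\Rightarrow A$ iff $\mathbf{K}\vDash\Gamma\Rightarrow A$; (ii) $\Gamma\vdash_{\mathbf{EKPC}}A$ iff $\Gamma\vdash_{i\mathbf{STL}(wF)}A$ iff $i\mathbf{ST}(wF)\vDash\Gamma\Rightarrow A$ iff $\mathbf{K}(wF)\vDash\Gamma\Rightarrow A$; (iii) $\Gamma\vdash_{\mathbf{KTPC}}A$ iff $\Gamma\vdash_{i\mathbf{STL}(F)}A$ iff $i\mathbf{ST}(F)\vDash\Gamma\Rightarrow A$ iff $\mathbf{K}(F)\vDash\Gamma\Rightarrow A$; (iv) $\Gamma\vdash_{\mathbf{BPC}}A$ iff $\Gamma\vdash_{i\mathbf{STL}(P)}A$ iff $i\mathbf{ST}(P)\vDash\Gamma\Rightarrow A$ iff $\mathbf{K}(P)\vDash\Gamma\Rightarrow A$; (v) $\Gamma\vdash_{\mathbf{EBPC}}A$ iff $\Gamma\vdash_{i\mathbf{STL}(P,wF)}A$ iff $i\mathbf{ST}(P,wF)\vDash\Gamma\Rightarrow A$ iff $\mathbf{K}(P,wF)\vDash\Gamma\Rightarrow A$; (vi) $\Gamma\vdash_{\mathbf{IPC}}A$ iff $\Gamma\vdash_{i\mathbf{STL}(P,F)}A$ iff $i\mathbf{ST}(P,F)\vDash\Gamma\Rightarrow A$ iff $\mathbf{K}(P,F)\vDash\Gamma\Rightarrow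 A$.
   Context: $\mathcal{L}_p$ has variables, $\top,\bot$, $\wedge,\vee,\to$; $\mathcal{L}_\nabla$ extends it by the constant $1$, binary $\otimes$ and unary $\nabla$. Sub-intuitionistic logics (judgements $\Gamma\vdash A$, $\Gamma$ a finite set): $\mathbf{KPC}$ has the assumption rule ($\Gamma\vdash A$ for $A\in\Gamma$) and rules (premises / conclusion): $\Gamma\vdash\top$; $\Gamma\vdash\bot$ / $\Gamma\vdash A$; $\vee E$: $\Gamma\vdash A\vee B$, $\Gamma,A\vdash C$, $\Gamma,B\vdash C$ / $\Gamma\vdash C$; $\vee I$: $\Gamma\vdash A_i$ / $\Gamma\vdash A_0\vee A_1$; $\wedge E$: $\Gamma\vdash A_0\wedge A_1$ / $\Gamma\vdash A_i$; $\wedge I$: $\Gamma\vdash A$, $\Gamma\vdash B$ / $\Gamma\vdash A\wedge B$; $\to I$: $A\vdash B$ / $\Gamma\vdash A\to B$; $(\wedge I)_f$: $\Gamma\vdash A\to B$, $\Gamma\vdash A\to C$ / $\Gamma\vdash A\to B\wedge C$; $(\vee E)_f$: $\Gamma\vdash A\to C$, $\Gamma\vdash B\to C$ / $\Gamma\vdash A\vee B\to C$; $tr_f$: $\Gamma\vdash A\to B$, $\Gamma\vdash B\to C$ / $\Gamma\vdash A\to C$. Additional rules: $E$: $\Gamma\vdash\top\to\bot$ / $\Gamma\vdash\bot$; $MP$: $\Gamma\vdash A$, $\Gamma\vdash A\to B$ / $\Gamma\vdash B$; $Cur$: $\Gamma\vdash A$ / $\Gamma\vdash\top\to A$. $\mathbf{BPC}=\mathbf{KPC}+Cur$,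 $\mathbf{EKPC}=\mathbf{KPC}+E$, $\mathbf{EBPC}=\mathbf{BPC}+E$, $\mathbf{KTPC}=\mathbf{KPC}+MP$, $\mathbf{IPC}=\mathbf{BPC}+MP$. Sequent logics (sequents $\Gamma\Rightarrow A$, $\Gamma$ a finite sequence, $\nabla\Gamma$ applying $\nabla$ to each member): $\mathbf{STL}$ has axioms $A\Rightarrow A$, $\Rightarrow1$, $\nabla1\Rightarrow1$, $\Gamma\Rightarrow\top$, $\Gamma,\bot,\Sigma\Rightarrow A$ and rules: cut: $\Gamma\Rightarrow A$, $\Pi,A,\Sigma\Rightarrow B$ / $\Pi,\Gamma,\Sigma\Rightarrow B$; $L\wedge$: $\Gamma,A,\Sigma\Rightarrow C$ / $\Gamma,A\wedge B,\Sigma\Rightarrow C$ and $\Gamma,B,\Sigma\Rightarrow C$ / $\Gamma,A\wedge B,\Sigma\Rightarrow C$; $R\wedge$: $\Gamma\Rightarrow A$, $\Gamma\Rightarrow B$ / $\Gamma\Rightarrow A\wedge B$; $L\vee$: $\Gamma,A,\Sigma\Rightarrow C$, $\Gamma,B,\Sigma\Rightarrow C$ / $\Gamma,A\vee B,\Sigma\Rightarrow C$; $R\vee$: $\Gamma\Rightarrow A$ / $\Gamma\Rightarrow A\vee B$ and $\Gamma\Rightarrow B$ / $\Gamma\Rightarrow A\vee B$; $L1$: $\Gamma,\Sigma\Rightarrow A$ / $\Gamma,1,\Sigma\Rightarrow A$; $L\otimes$: $\Gamma,A,B,\Sigma\Rightarrow C$ / $\Gamma,A\otimes B,\Sigma\Rightarrow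 C$; $R\otimes$: $\Gamma\Rightarrow A$, $\Sigma\Rightarrow B$ / $\Gamma,\Sigma\Rightarrow A\otimes B$; $(\nabla)$: $A\Rightarrow B$ / $\nabla A\Rightarrow\nabla B$; Oplax: $\nabla A,\nabla B\Rightarrow C$ / $\nabla(A\otimes B)\Rightarrow C$; $L\to$: $\Gamma\Rightarrow A$, $\Pi,B,\Sigma\Rightarrow C$ / $\Pi,\Gamma,\nabla(A\to B),\Sigma\Rightarrow C$; $R\to$: $A,\nabla\Gamma\Rightarrow B$ / $\Gamma\Rightarrow A\to B$. Schemes: $(P)$: $\Gamma\Rightarrow\nabla A$ / $\Gamma\Rightarrow A$; $(F)$: $\Gamma\Rightarrow A$ / $\Gamma\Rightarrow\nabla A$; $(wF)$: $\nabla A\Rightarrow\bot$ / $A\Rightarrow\bot$. $i\mathbf{STL}(\mathcal{R})$ is $\mathbf{STL}$ plus the schemes in $\mathcal{R}$ plus left weakening, contraction and exchange ($i\mathbf{STL}=i\mathbf{STL}(\emptyset)$). Topological semantics: a spacetime is $(\mathscr{X},\nabla)$ with $\mathscr{X}$ a locale and $\nabla$ join preserving; its implication $\to$ is characterized by $a\wedge\nabla b\le c$ iff $b\le a\to c$. Valuations send variables into $\mathscr{X}$ and extend by $1,\top\mapsto$ top, $\bot\mapsto$ bottom, $\wedge,\otimes\mapsto\wedge$, $\vee\mapsto\vee$, $\nabla\mapsto\nabla$, $\to\mapsto\to$; $\Gamma\Rightarrow A$ holds if the meet of the values of $\Gamma$ is below the value of $A$. $i\mathbf{ST}(\mathcal{R})$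 is the class of spacetimes with $\nabla a\le a$ for all $a$ (if $P\in\mathcal{R}$), $a\le\nabla a$ (if $F\in\mathcal{R}$), $\nabla a=0\Rightarrow a=0$ (if $wF\in\mathcal{R}$); $i\mathbf{ST}\vDash$ means validity under all valuations in all spacetimes of the class. Kripke semantics: a Kripke model is $(W,\le,R,V)$ with $(W,\le)$ a poset, $R\subseteq W\times W$ such that $(u,v)\in R$, $u'\le u$, $v\le v'$ imply $(u',v')\in R$, $V$ assigning upsets to variables; forcing: $\top,1$ always, $\bot$ never, $\wedge,\otimes$ as conjunction, $\vee$ as disjunction, $w\Vdash A\to B$ iff for all $v$ with $(w,v)\in R$, $v\Vdash A$ implies $v\Vdash B$, $w\Vdash\nabla A$ iff some $v$ with $(v,w)\in R$ forces $A$. $\mathbf{K}(\mathcal{R})\vDash\Gamma\Rightarrow A$ means in every Kripke model satisfying the conditions ($P$: $R\subseteq\le$; $F$: $R$ reflexive; $wF$: $R$ serial) for schemes in $\mathcal{R}$, every world forcing all of $\Gamma$ forces $A$; $\mathbf{K}$ is the class of all Kripke models. *)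

From Stdlib Require Import List.
Import ListNotations.
Set Implicit Arguments.

Inductive pform : Type :=
| PVar : nat -> pform
| PTop : pform
| PBot : pform
| PAnd : pform -> pform -> pform
| POr  : pform -> pform -> pform
| PImp : pform -> pform -> pform.

Inductive form : Type :=
| Var  : nat -> form
| Top  : form
| Bot  : form
| One  : form
| And  : form -> form -> form
| Or   : form -> form -> form
| Imp  : form -> form -> form
| Tens : form -> form -> form
| Nab  : form -> form.

Fixpoint emb (A : pform) : form :=
  match A with
  | PVar n => Var n
  | PTop => Top
  | PBot => Bot
  | PAnd A B => And (emb A) (emb B)
  | POr A B => Or (emb A) (emb B)
  | PImp A B => Imp (emb A) (emb B)
  end.

Record ndlogic := NDLogic { ruleE : bool; ruleMP : bool; ruleCur : bool }.

Definition KPC  := NDLogic false false false.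
Definition EKPC := NDLogic true  false false.
Definition KTPC := NDLogic false true  false.
Definition BPC  := NDLogic false false true.
Definition EBPC := NDLogic true  false true.
Definition IPC  := NDLogic false true  true.

(* Contexts are finite sets, represented by lists (only membership matters);
   "Gamma, A" is A :: Gamma. *)
Inductive nd (L : ndlogic) : list pform -> pform -> Prop :=
| nd_ax : forall G A, In A G -> nd L G A
| nd_top : forall G, nd L G PTop
| nd_bot : forall G A, nd L G PBot -> nd L G A
| nd_orE : forall G A B C, nd L G (POr A B) -> nd L (A :: G) C -> nd L (B :: G) C ->
    nd L G C
| nd_orI0 : forall G A B, nd L G A -> nd L G (POr A B)
| nd_orI1 : forall G A B, nd L G B -> nd L G (POr A B)
| nd_andE0 : forall G A B, nd L G (PAnd A B) -> nd L G A
| nd_andE1 : forall G A B, nd L G (PAnd A B) -> nd L G B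
| nd_andI : forall G A B, nd L G A -> nd L G B -> nd L G (PAnd A B)
| nd_impI : forall G A B, nd L [A] B -> nd L G (PImp A B)
| nd_andIf : forall G A B C, nd L G (PImp A B) -> nd L G (PImp A C) ->
    nd L G (PImp A (PAnd B C))
| nd_orEf : forall G A B C, nd L G (PImp A C) -> nd L G (PImp B C) ->
    nd L G (PImp (POr A B) C)
| nd_trf : forall G A B C, nd L G (PImp A B) -> nd L G (PImp B C) -> nd L G (PImp A C)
| nd_E : forall G, ruleE L = true -> nd L G (PImp PTop PBot) -> nd L G PBot
| nd_MP : forall G A B, ruleMP L = true -> nd L G A -> nd L G (PImp A B) -> nd L G B
| nd_Cur : forall G A, ruleCur L = true -> nd L G A -> nd L G (PImp PTop A).

Record schemes := Schemes { hasP : bool; hasF : bool; haswF : bool }.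

Definition R_none := Schemes false false false.
Definition R_wF   := Schemes false false true.
Definition R_F    := Schemes false true  false.
Definition R_P    := Schemes true  false false.
Definition R_PwF  := Schemes true  false true.
Definition R_PF   := Schemes true  true  false.

Definition nabs (G : list form) : list form := map Nab G.

Inductive stl (R : schemes) : list form -> form -> Prop :=
| s_id : forall A, stl R [A] A
| s_one : stl R [] One
| s_nabone : stl R [Nab One] One
| s_top : forall G, stl R G Top
| s_bot : forall G S A, stl R (G ++ Bot :: S) A
| s_cut : forall G P S A B, stl R G A -> stl R (P ++ A :: S) B -> stl R (P ++ G ++ S) B
| s_Land0 : forall G A B S C, stl R (G ++ A :: S) C -> stl R (G ++ And A B :: S) C
| s_Land1 : forall G A B S C, stl R (G ++ B :: S) C -> stl R (G ++ And A B :: S) C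
| s_Rand : forall G A B, stl R G A -> stl R G B -> stl R G (And A B)
| s_Lor : forall G A B S C, stl R (G ++ A :: S) C -> stl R (G ++ B :: S) C ->
    stl R (G ++ Or A B :: S) C
| s_Ror0 : forall G A B, stl R G A -> stl R G (Or A B)
| s_Ror1 : forall G A B, stl R G B -> stl R G (Or A B)
| s_L1 : forall G S A, stl R (G ++ S) A -> stl R (G ++ One :: S) A
| s_Ltens : forall G A B S C, stl R (G ++ A :: B :: S) C -> stl R (G ++ Tens A B :: S) C
| s_Rtens : forall G S A B, stl R G A -> stl R S B -> stl R (G ++ S) (Tens A B)
| s_nab : forall A B, stl R [A] B -> stl R [Nab A] (Nab B)
| s_oplax : forall A B C, stl R [Nab A; Nab B] C -> stl R [Nab (Tens A B)] C
| s_Limp : forall G P S A B C, stl R G A -> stl R (P ++ B :: S) C ->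
    stl R (P ++ G ++ Nab (Imp A B) :: S) C
| s_Rimp : forall G A B, stl R (A :: nabs G) B -> stl R G (Imp A B)
| s_P : forall G A, hasP R = true -> stl R G (Nab A) -> stl R G A
| s_F : forall G A, hasF R = true -> stl R G A -> stl R G (Nab A)
| s_wF : forall A, haswF R = true -> stl R [Nab A] Bot -> stl R [A] Bot
| s_weak : forall G B S A, stl R (G ++ S) A -> stl R (G ++ B :: S) A
| s_contr : forall G B S A, stl R (G ++ B :: B :: S) A -> stl R (G ++ B :: S) A
| s_exch : forall G B C S A, stl R (G ++ B :: C :: S) A -> stl R (G ++ C :: B :: S) A.

(* A locale, presented by its frame of opens: a complete lattice in which
   binary meets distribute over arbitrary joins. *)
Record locale := Locale {
  car :> Type;
  le : car -> car -> Prop;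
  le_refl : forall a, le a a;
  le_trans : forall a b c, le a b -> le b c -> le a c;
  le_antisym : forall a b, le a b -> le b a -> a = b;
  meet : car -> car -> car;
  meet_glb : forall a b c, le c (meet a b) <-> (le c a /\ le c b);
  sup : (car -> Prop) -> car;
  sup_lub : forall (S : car -> Prop) c, le (sup S) c <-> (forall s, S s -> le s c);
  meet_sup_distr : forall a (S : car -> Prop),
    meet a (sup S) = sup (fun x => exists s, S s /\ x = meet a s)
}.

Definition ltop (X : locale) : X := sup X (fun _ => True).
Definition lbot (X : locale) : X := sup X (fun _ => False).
Definition ljoin (X : locale) (a b : X) : X := sup X (fun x => x = a \/ x = b).

Record spacetime := Spacetime {
  st_loc :> locale;
  nab : st_loc -> st_loc;
  nab_join : forall S : st_loc -> Prop,
    nab (sup st_loc S) = sup st_loc (fun y => exists s, S s /\ y = nab s)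
}.

(* The implication: the right adjoint, a /\ nab b <= c  iff  b <= a -> c *)
Definition stimp (X : spacetime) (a c : X) : X :=
  sup X (fun b => le X (meet X a (nab X b)) c).

Fixpoint sval (X : spacetime) (v : nat -> X) (A : form) : X :=
  match A with
  | Var n => v n
  | Top => ltop X
  | One => ltop X
  | Bot => lbot X
  | And A B => meet X (sval X v A) (sval X v B)
  | Tens A B => meet X (sval X v A) (sval X v B)
  | Or A B => ljoin X (sval X v A) (sval X v B)
  | Imp A B => stimp X (sval X v A) (sval X v B)
  | Nab A => nab X (sval X v A)
  end.

Definition meet_list (X : spacetime) (v : nat -> X) (G : list form) : X :=
  fold_right (fun A acc => meet X (sval X v A) acc) (ltop X) G.

Definition in_iST (R : schemes) (X : spacetime) : Prop :=
  (hasP R = true -> forall a : X, le X (nab X a) a) /\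
  (hasF R = true -> forall a : X, le X a (nab X a)) /\
  (haswF R = true -> forall a : X, nab X a = lbot X -> a = lbot X).

Definition iST_valid (R : schemes) (G : list form) (A : form) : Prop :=
  forall (X : spacetime) (v : nat -> X), in_iST R X ->
    le X (meet_list X v G) (sval X v A).

Record kmodel := KModel {
  world : Type;
  kle : world -> world -> Prop;
  kle_refl : forall u, kle u u;
  kle_trans : forall u v w, kle u v -> kle v w -> kle u w;
  kle_antisym : forall u v, kle u v -> kle v u -> u = v;
  krel : world -> world -> Prop;
  krel_mono : forall u v u' v', krel u v -> kle u' u -> kle v v' -> krel u' v';
  kval : nat -> world -> Prop;
  kval_up : forall n u v, kle u v -> kval n u -> kval n v
}.

Fixpoint forces (M : kmodel) (w : world M) (A : form) : Prop :=
  match A with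
  | Var n => kval M n w
  | Top => True
  | One => True
  | Bot => False
  | And A B => forces M w A /\ forces M w B
  | Tens A B => forces M w A /\ forces M w B
  | Or A B => forces M w A \/ forces M w B
  | Imp A B => forall v, krel M w v -> forces M v A -> forces M v B
  | Nab A => exists v, krel M v w /\ forces M v A
  end.

Definition in_K (R : schemes) (M : kmodel) : Prop :=
  (hasP R = true -> forall u v, krel M u v -> kle M u v) /\
  (hasF R = true -> forall u, krel M u u) /\
  (haswF R = true -> forall u, exists v, krel M u v).

Definition K_valid (R : schemes) (G : list form) (A : form) : Prop :=
  forall (M : kmodel), in_K R M ->
    forall w : world M, (forall B, In B G -> forces M w B) -> forces M w A.

Definition four_equiv (L : ndlogic) (R : schemes) (G : list pform) (A : pform) : Prop :=
  (nd L G A <-> stl R (map emb G) (emb A)) /\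
  (stl R (map emb G) (emb A) <-> iST_valid R (map emb G) (emb A)) /\
  (iST_valid R (map emb G) (emb A) <-> K_valid R (map emb G) (emb A)).

(* The four judgements are linked by a cycle of implications, proved once for every
   pair of a natural-deduction logic and a set of schemes whose extra rules match
   (E with wF, MP with F, Cur with P).  An ND derivation translates rule by rule into
   iSTL: the implication rules become sequents derived from L-> and R->, and each
   extra rule is derived from its scheme.  iSTL is sound in spacetimes because ->
   is interpreted as the right adjoint of [a /\ nab -].  The upsets of a Kripke model
   form a spacetime whose nabla is the image under R, in which the value of a formula
   is the set of worlds forcing it; the Kripke frame conditions become the spacetime
   conditions.  Finally the ND logic is complete for its Kripke models: the canonical
   model consists of prime theories, R-related when modus ponens passes from one to
   the other, and successors are built by a Lindenbaum construction for the
   consequence relation "T contains /\G -> A". *)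

From Stdlib Require Import List Permutation Classical Cantor Lia.
From Stdlib Require Import FunctionalExtensionality PropExtensionality ProofIrrelevance.
Import ListNotations.

Section SequentCalculus.
Variable R : schemes.

Lemma stl_perm G G' A : Permutation G G' -> stl R G A -> stl R G' A.
Proof.
  intros HP.
  enough (H : forall P, stl R (P ++ G) A -> stl R (P ++ G') A) by exact (H []).
  induction HP as [|x l l' _ IH|x y l|l l' l'' _ IH1 _ IH2]; intros P H.
  - exact H.
  - replace (P ++ x :: l') with ((P ++ [x]) ++ l') by (rewrite <- app_assoc; reflexivity).
    apply IH. rewrite <- app_assoc. exact H.
  - apply s_exch. exact H.
  - auto.
Qed.

Lemma stl_weaken_r G D A : stl R G A -> stl R (G ++ D) A.
Proof.
  intros H; induction D as [|B D IH].
  - rewrite app_nil_r; exact H.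
  - apply s_weak. exact IH.
Qed.

Lemma stl_contract D G A : incl D G -> stl R (D ++ G) A -> stl R G A.
Proof.
  revert G; induction D as [|B D IH]; intros G Hi H; [exact H|].
  apply incl_cons_inv in Hi as [HB Hi].
  apply IH; [exact Hi|].
  destruct (in_split _ _ HB) as [G1 [G2 ->]].
  rewrite app_assoc. apply s_contr.
  apply (stl_perm (B :: D ++ G1 ++ B :: G2)); [|exact H].
  rewrite app_assoc. apply Permutation_middle.
Qed.

Lemma stl_incl G G' A : incl G G' -> stl R G A -> stl R G' A.
Proof. intros Hi H. apply (stl_contract G); [exact Hi|]. apply stl_weaken_r. exact H. Qed.

Lemma stl_ax G A : In A G -> stl R G A.
Proof. intros H. apply (stl_incl [A]); [intros x [<-|[]]; exact H| apply s_id]. Qed.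

Lemma stl_subst D G A :
  stl R D A -> (forall B, In B D -> stl R G B) -> stl R G A.
Proof.
  intros H HD. apply (stl_weaken_r _ G) in H. revert A H.
  induction D as [|B D IH]; intros A H; [exact H|].
  apply IH; [intros C HC; apply HD; right; exact HC|].
  apply (stl_contract G); [apply incl_appr, incl_refl|].
  exact (s_cut [] (D ++ G) (HD B (in_eq _ _)) H).
Qed.

Lemma stl_cut1 G A B : stl R G A -> stl R [A] B -> stl R G B.
Proof. intros HA H. apply (stl_subst [A]); [exact H| intros C [<-|[]]; exact HA]. Qed.

Lemma stl_cut2 G A B C : stl R G A -> stl R G B -> stl R [A; B] C -> stl R G C.
Proof.
  intros HA HB H. apply (stl_subst [A; B]); [exact H| intros D [<-|[<-|[]]]; assumption].
Qed.

Lemma stl_imp_elim A B : stl R [A; Nab (Imp A B)] B.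
Proof. exact (s_Limp [] [] B (s_id R A) (s_id R B)). Qed.

Lemma stl_imp_and A B C : stl R [Imp A B; Imp A C] (Imp A (And B C)).
Proof.
  apply s_Rimp, s_Rand.
  - apply (stl_incl [A; Nab (Imp A B)]); [intros x [<-|[<-|[]]]; simpl; auto| apply stl_imp_elim].
  - apply (stl_incl [A; Nab (Imp A C)]); [intros x [<-|[<-|[]]]; simpl; auto| apply stl_imp_elim].
Qed.

Lemma stl_imp_or A B C : stl R [Imp A C; Imp B C] (Imp (Or A B) C).
Proof.
  apply s_Rimp, (s_Lor []).
  - apply (stl_incl [A; Nab (Imp A C)]); [intros x [<-|[<-|[]]]; simpl; auto| apply stl_imp_elim].
  - apply (stl_incl [B; Nab (Imp B C)]); [intros x [<-|[<-|[]]]; simpl; auto| apply stl_imp_elim].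
Qed.

Lemma stl_imp_trans A B C : stl R [Imp A B; Imp B C] (Imp A C).
Proof. apply s_Rimp. exact (s_Limp [] [] C (stl_imp_elim A B) (s_id R C)). Qed.

Lemma stl_nabs : hasP R = true -> forall G A, stl R G A -> stl R (nabs G) A.
Proof.
  intros HP G A H. apply (stl_subst G); [exact H|].
  intros B HB. apply (stl_incl [Nab B]).
  - intros x [<-|[]]. apply in_map. exact HB.
  - apply s_P; [exact HP| apply s_id].
Qed.

Lemma stl_E : haswF R = true -> stl R [Imp Top Bot] Bot.
Proof. intros HW. apply s_wF; [exact HW|]. exact (s_Limp [] [] Bot (s_top R []) (s_bot R [] [] Bot)). Qed.

Lemma stl_MP : hasF R = true -> forall A B, stl R [A; Imp A B] B.
Proof. intros HF A B. exact (s_cut [A] [] (s_F HF (s_id R _)) (stl_imp_elim A B)). Qed.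

End SequentCalculus.

Section TranslationSoundness.
Variables (L : ndlogic) (R : schemes).
Hypotheses (HE : ruleE L = true -> haswF R = true) (HM : ruleMP L = true -> hasF R = true)
  (HC : ruleCur L = true -> hasP R = true).

Lemma stl_of_nd G A : nd L G A -> stl R (map emb G) (emb A).
Proof.
  induction 1; simpl in *.
  - apply stl_ax, in_map, H.
  - apply s_top.
  - apply (stl_cut1 _ _ _ _ IHnd), (s_bot R [] []).
  - apply (stl_subst _ _ _ _ (s_Lor [] _ _ _ IHnd2 IHnd3)).
    intros D [<-|HD]; [exact IHnd1| apply stl_ax, HD].
  - apply s_Ror0, IHnd.
  - apply s_Ror1, IHnd.
  - apply (stl_cut1 _ _ _ _ IHnd), (s_Land0 [] _ _ []), s_id.
  - apply (stl_cut1 _ _ _ _ IHnd), (s_Land1 [] _ _ []), s_id.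
  - apply s_Rand; assumption.
  - apply s_Rimp, (stl_incl _ [emb A]); [intros x [<-|[]]; left; reflexivity| exact IHnd].
  - apply (stl_cut2 _ _ _ _ _ IHnd1 IHnd2), stl_imp_and.
  - apply (stl_cut2 _ _ _ _ _ IHnd1 IHnd2), stl_imp_or.
  - apply (stl_cut2 _ _ _ _ _ IHnd1 IHnd2), stl_imp_trans.
  - apply (stl_cut1 _ _ _ _ IHnd), stl_E, HE, H.
  - apply (stl_cut2 _ _ _ _ _ IHnd1 IHnd2), stl_MP, HM, H.
  - apply s_Rimp, (stl_incl _ (nabs (map emb G))); [intros x Hx; right; exact Hx|].
    apply stl_nabs; [apply HC, H| exact IHnd].
Qed.

End TranslationSoundness.

Section LocaleFacts.
Variable X : locale.

Lemma le_meet_l (a b : X) : le X (meet X a b) a.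
Proof. exact (proj1 (proj1 (meet_glb X a b _) (le_refl X _))). Qed.

Lemma le_meet_r (a b : X) : le X (meet X a b) b.
Proof. exact (proj2 (proj1 (meet_glb X a b _) (le_refl X _))). Qed.

Lemma le_meet (a b c : X) : le X c a -> le X c b -> le X c (meet X a b).
Proof. intros Ha Hb. apply meet_glb. split; assumption. Qed.

Lemma le_sup (S : X -> Prop) s : S s -> le X s (sup X S).
Proof. intros H. exact (proj1 (sup_lub X S _) (le_refl X _) s H). Qed.

Lemma sup_le (S : X -> Prop) c : (forall s, S s -> le X s c) -> le X (sup X S) c.
Proof. apply sup_lub. Qed.

Lemma le_ltop (a : X) : le X a (ltop X).
Proof. apply le_sup. exact I. Qed.

Lemma lbot_le (a : X) : le X (lbot X) a.
Proof. apply sup_le. intros s []. Qed.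

Lemma le_join_l (a b : X) : le X a (ljoin X a b).
Proof. apply le_sup. left; reflexivity. Qed.

Lemma le_join_r (a b : X) : le X b (ljoin X a b).
Proof. apply le_sup. right; reflexivity. Qed.

Lemma join_le (a b c : X) : le X a c -> le X b c -> le X (ljoin X a b) c.
Proof. intros Ha Hb. apply sup_le. intros s [-> | ->]; assumption. Qed.

Lemma le_join_split (z a b c : X) :
  le X z (ljoin X a b) -> le X (meet X z a) c -> le X (meet X z b) c -> le X z c.
Proof.
  intros H Ha Hb. apply (le_trans X _ (meet X z (ljoin X a b))); [apply le_meet; [apply le_refl| exact H]|].
  unfold ljoin at 1. rewrite meet_sup_distr. apply sup_le.
  intros s [s' [[-> | ->] ->]]; assumption.
Qed.

End LocaleFacts.

Section SpacetimeFacts.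
Variable X : spacetime.

Lemma nab_mono (a b : X) : le X a b -> le X (nab X a) (nab X b).
Proof.
  intros H.
  replace b with (ljoin X a b) by (apply le_antisym; [apply join_le, le_refl| apply le_join_r]; exact H).
  unfold ljoin. rewrite nab_join. apply le_sup. exists a. split; [left|]; reflexivity.
Qed.

Lemma stimp_adj (a b c : X) : le X b (stimp X a c) <-> le X (meet X a (nab X b)) c.
Proof.
  split; [|intros H; apply le_sup; exact H].
  intros H. apply (le_trans X _ (meet X a (nab X (stimp X a c)))).
  - apply le_meet; [apply le_meet_l|].
    apply (le_trans X _ (nab X b)); [apply le_meet_r| apply nab_mono, H].
  - unfold stimp. rewrite nab_join, meet_sup_distr. apply sup_le.
    intros s [y [[s' [Hs' ->]] ->]]. exact Hs'.
Qed.

Lemma stimp_mp (z a c : X) : le X z a -> le X z (nab X (stimp X a c)) -> le X z c.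
Proof.
  intros Ha Hn. apply (le_trans X _ (meet X a (nab X (stimp X a c)))).
  - apply le_meet; assumption.
  - apply stimp_adj, le_refl.
Qed.

End SpacetimeFacts.

Section Soundness.
Variables (R : schemes) (X : spacetime) (v : nat -> X).
Hypothesis HX : in_iST R X.

Definition below_all (z : X) (G : list form) : Prop := Forall (fun B => le X z (sval X v B)) G.

Lemma below_all_trans z' z G : le X z' z -> below_all z G -> below_all z' G.
Proof. intros Hz. apply Forall_impl. intros B. apply le_trans, Hz. Qed.

Lemma below_all_meet_list G : below_all (meet_list X v G) G.
Proof.
  induction G as [|B G IH]; constructor.
  - apply le_meet_l.
  - eapply below_all_trans; [apply le_meet_r| exact IH].
Qed.

Ltac below_split :=
  unfold below_all in *; rewrite ?Forall_app, ?Forall_cons_iff, ?Forall_nil_iff in *;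
  repeat match goal with H : _ /\ _ |- _ => destruct H end; simpl in *.

(* The lower bound z varies along the induction: L\/ replaces it by [meet z A] and
   R-> by [meet A (nab z)]. *)
Lemma stl_sound_below G A : stl R G A -> forall z, below_all z G -> le X z (sval X v A).
Proof.
  destruct HX as [HP [HF HW]].
  induction 1; intros z Hz; below_split.
  - assumption.
  - apply le_ltop.
  - apply le_ltop.
  - apply le_ltop.
  - eapply le_trans; [eassumption| apply lbot_le].
  - apply IHstl2. below_split. auto.
  - apply IHstl. below_split. repeat split; auto.
    eapply le_trans; [eassumption| apply le_meet_l].
  - apply IHstl. below_split. repeat split; auto.
    eapply le_trans; [eassumption| apply le_meet_r].
  - apply le_meet; auto.
  - eapply le_join_split; [eassumption| apply IHstl1| apply IHstl2]; below_split;
      repeat split; try apply le_meet_r; eapply below_all_trans; try eassumption; apply le_meet_l.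
  - eapply le_trans; [apply IHstl; assumption| apply le_join_l].
  - eapply le_trans; [apply IHstl; assumption| apply le_join_r].
  - apply IHstl. below_split. auto.
  - apply IHstl. below_split. repeat split; auto;
      eapply le_trans; try eassumption; [apply le_meet_l| apply le_meet_r].
  - apply le_meet; auto.
  - eapply le_trans; [eassumption| apply nab_mono, IHstl].
    below_split. auto using le_refl.
  - apply IHstl. below_split. repeat split;
      eapply le_trans; try eassumption; apply nab_mono; [apply le_meet_l| apply le_meet_r].
  - apply IHstl2. below_split. repeat split; auto.
    apply (stimp_mp X z (sval X v A)); [apply IHstl1|]; assumption.
  - apply stimp_adj, IHstl. below_split. split; [apply le_meet_l|].
    apply Forall_map. eapply Forall_impl; [|exact Hz]. intros D HD.
    eapply le_trans; [apply le_meet_r| apply nab_mono, HD].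
  - eapply le_trans; [apply IHstl, Hz| apply HP; assumption].
  - eapply le_trans; [apply IHstl, Hz| apply HF; assumption].
  - assert (E : nab X (sval X v A) = lbot X).
    { apply le_antisym; [apply IHstl; below_split; auto using le_refl| apply lbot_le]. }
    rewrite <- (HW H _ E). assumption.
  - apply IHstl. below_split. auto.
  - apply IHstl. below_split. auto.
  - apply IHstl. below_split. auto.
Qed.

End Soundness.

Lemma stl_sound R G A : stl R G A -> iST_valid R G A.
Proof. intros H X v HX. exact (stl_sound_below R X v HX G A H _ (below_all_meet_list X v G)). Qed.

Section UpsetSpacetime.
Variable M : kmodel.

Definition upset (U : world M -> Prop) : Prop := forall u v, kle M u v -> U u -> U v.

Definition up := {U : world M -> Prop | upset U}.

Lemma up_ext (a b : up) : (forall w, proj1_sig a w <-> proj1_sig b w) -> a = b.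
Proof.
  destruct a as [a Ha], b as [b Hb]; simpl; intros H.
  assert (a = b) as <- by (extensionality w; apply propositional_extensionality, H).
  f_equal. apply proof_irrelevance.
Qed.

Definition up_le (a b : up) : Prop := forall w, proj1_sig a w -> proj1_sig b w.

Definition up_meet (a b : up) : up.
Proof.
  exists (fun w => proj1_sig a w /\ proj1_sig b w).
  intros u v Huv [Ha Hb]. split; [exact (proj2_sig a u v Huv Ha)| exact (proj2_sig b u v Huv Hb)].
Defined.

Definition up_sup (S : up -> Prop) : up.
Proof.
  exists (fun w => exists s, S s /\ proj1_sig s w).
  intros u v Huv [s [Hs H]]. exists s. split; [exact Hs| exact (proj2_sig s u v Huv H)].
Defined.

Definition up_nab (a : up) : up.
Proof.
  exists (fun w => exists u, krel M u w /\ proj1_sig a u).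
  intros w w' Hw [u [Hu H]]. exists u. split; [exact (krel_mono M u w u w' Hu (kle_refl M u) Hw)| exact H].
Defined.

Definition up_locale : locale.
Proof.
  refine (@Locale up up_le _ _ _ up_meet _ up_sup _ _).
  - intros a w H; exact H.
  - intros a b c H1 H2 w H; auto.
  - intros a b H1 H2; apply up_ext; split; auto.
  - intros a b c; unfold up_le; simpl; split.
    + intros H; split; intros w Hw; apply (H w Hw).
    + intros [H1 H2] w Hw; split; auto.
  - intros S c; unfold up_le; simpl; split.
    + intros H s Hs w Hw. apply H. exists s; auto.
    + intros H w [s [Hs Hw]]. exact (H s Hs w Hw).
  - intros a S. apply up_ext; simpl. intros w; split.
    + intros [Ha [s [Hs Hw]]]. exists (up_meet a s). split; [exists s; auto| simpl; auto].
    + intros [x [[s [Hs ->]] [Ha Hw]]]. split; [exact Ha| exists s; auto].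
Defined.

Definition up_spacetime : spacetime.
Proof.
  refine (@Spacetime up_locale up_nab _).
  intros S. apply up_ext; simpl. intros w; split.
  - intros [u [Hu [s [Hs Hsu]]]]. exists (up_nab s). split; [exists s; auto| simpl; exists u; auto].
  - intros [y [[s [Hs ->]] [u [Hu Hsu]]]]. exists u. split; [exact Hu| exists s; auto].
Defined.

Lemma forces_up A : upset (fun w => forces M w A).
Proof.
  induction A; intros u v Huv H; simpl in *.
  - exact (kval_up M n u v Huv H).
  - exact I.
  - exact H.
  - exact I.
  - destruct H; split; eauto.
  - destruct H; [left|right]; eauto.
  - intros x Hx. apply H. exact (krel_mono M v x u x Hx Huv (kle_refl M x)).
  - destruct H; split; eauto.
  - destruct H as [x [Hx H]]. exists x. split; [exact (krel_mono M x u x v Hx (kle_refl M x) Huv)| exact H].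
Qed.

Definition up_forces (A : form) : up := exist _ _ (forces_up A).

Definition up_val (n : nat) : up := exist _ _ (kval_up M n).

Lemma sval_up_spacetime A w : proj1_sig (sval up_spacetime up_val A) w <-> forces M w A.
Proof.
  revert w; induction A; intros w; simpl.
  - reflexivity.
  - split; [auto| intros _]. exists (up_forces Top). split; simpl; auto.
  - split; [intros [s [[] _]]| intros []].
  - split; [auto| intros _]. exists (up_forces Top). split; simpl; auto.
  - rewrite IHA1, IHA2. reflexivity.
  - split.
    + intros [s [[-> | ->] Hs]]; [left; apply IHA1| right; apply IHA2]; exact Hs.
    + intros [H|H]; [exists (sval up_spacetime up_val A1)| exists (sval up_spacetime up_val A2)];
        split; auto; [apply IHA1| apply IHA2]; exact H.
  - split.
    + intros [b [Hb Hw]] v Hv HA. apply IHA2, Hb. simpl. split; [apply IHA1, HA| exists w; auto].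
    + intros H. exists (up_forces (Imp A1 A2)). split; [|exact H].
      intros x [Hx [u [Hu Hu2]]]. apply IHA2, (Hu2 x Hu), IHA1, Hx.
  - rewrite IHA1, IHA2. reflexivity.
  - split; intros [u [Hu H]]; exists u; split; auto; apply IHA, H.
Qed.

Lemma up_spacetime_in_iST R : in_K R M -> in_iST R up_spacetime.
Proof.
  intros [HP [HF HW]]. split; [|split].
  - intros H a w [u [Hu Ha]]. exact (proj2_sig a u w (HP H u w Hu) Ha).
  - intros H a w Ha. exists w. split; [apply HF, H| exact Ha].
  - intros H a E. apply up_ext. intros w; split; [|intros [s [[] _]]].
    intros Hw. destruct (HW H w) as [u Hu].
    assert (Hn : proj1_sig (nab up_spacetime a) u) by (exists w; auto).
    rewrite E in Hn. destruct Hn as [s [[] _]].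
Qed.

End UpsetSpacetime.

Lemma iST_valid_K_valid R G A : iST_valid R G A -> K_valid R G A.
Proof.
  intros H M HM w Hw. apply sval_up_spacetime.
  apply (H (up_spacetime M) (up_val M) (up_spacetime_in_iST M R HM)).
  clear H. induction G as [|B G IH]; simpl.
  - exists (up_forces M Top). split; simpl; auto.
  - split; [apply sval_up_spacetime, Hw; left; reflexivity|].
    apply IH. intros C HC. apply Hw. right; exact HC.
Qed.

Section NaturalDeduction.
Variable L : ndlogic.

Lemma nd_weaken G G' A : nd L G A -> incl G G' -> nd L G' A.
Proof.
  intros H; revert G'; induction H; intros G' Hi; eauto using nd.
  apply (nd_orE (IHnd1 G' Hi)); [apply IHnd2| apply IHnd3];
    exact (incl_cons (in_eq _ _) (incl_tl _ Hi)).
Qed.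

Lemma nd_subst G A : nd L G A -> forall G', (forall B, In B G -> nd L G' B) -> nd L G' A.
Proof.
  induction 1; intros G' HG; eauto using nd.
  apply (nd_orE (IHnd1 G' HG)); [apply IHnd2| apply IHnd3];
    (intros D [<-|HD]; [apply nd_ax, in_eq| apply (nd_weaken _ _ _ (HG D HD)), incl_tl, incl_refl]).
Qed.

Lemma nd_cut G A B : nd L G A -> nd L (A :: G) B -> nd L G B.
Proof. intros HA HB. apply (nd_subst _ _ HB). intros D [<-|HD]; [exact HA| apply nd_ax, HD]. Qed.

Fixpoint pconj (G : list pform) : pform :=
  match G with [] => PTop | A :: G => PAnd A (pconj G) end.

Lemma nd_pconj_elim D G A : nd L D (pconj G) -> In A G -> nd L D A.
Proof.
  induction G as [|B G IH]; intros H HA; [destruct HA|].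
  destruct HA as [<-|HA]; [exact (nd_andE0 H)| exact (IH (nd_andE1 H) HA)].
Qed.

Lemma nd_pconj_intro D G : (forall A, In A G -> nd L D A) -> nd L D (pconj G).
Proof.
  induction G as [|B G IH]; intros H; [apply nd_top|].
  apply nd_andI; [apply H, in_eq| apply IH; intros A HA; apply H, in_cons, HA].
Qed.

Lemma nd_imp_pconj D G A : nd L G A -> nd L D (PImp (pconj G) A).
Proof.
  intros H. apply nd_impI, (nd_subst _ _ H).
  intros B HB. apply (nd_pconj_elim _ G); [apply nd_ax, in_eq| exact HB].
Qed.

End NaturalDeduction.

Record consequence (Der : list pform -> pform -> Prop) : Prop := {
  cons_mono : forall G G' A, Der G A -> incl G G' -> Der G' A;
  cons_ax : forall G A, In A G -> Der G A;
  cons_cut : forall G A B, Der G A -> Der (A :: G) B -> Der G B;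
  cons_or : forall G A A' B, Der (A :: G) B -> Der (A' :: G) B -> Der (POr A A' :: G) B
}.

Lemma consequence_nd L : consequence (nd L).
Proof.
  split.
  - exact (nd_weaken L).
  - exact (nd_ax L).
  - exact (nd_cut L).
  - intros G A A' B HA HA'. apply (nd_orE (nd_ax _ _ _ (in_eq _ _))).
    + apply (nd_weaken _ _ _ _ HA). intros x [<-|Hx]; simpl; auto.
    + apply (nd_weaken _ _ _ _ HA'). intros x [<-|Hx]; simpl; auto.
Qed.

Fixpoint pform_code (A : pform) : nat :=
  match A with
  | PVar n => to_nat (0, n)
  | PTop => to_nat (1, 0)
  | PBot => to_nat (2, 0)
  | PAnd A B => to_nat (3, to_nat (pform_code A, pform_code B))
  | POr A B => to_nat (4, to_nat (pform_code A, pform_code B))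
  | PImp A B => to_nat (5, to_nat (pform_code A, pform_code B))
  end.

Lemma to_nat_inj p q : to_nat p = to_nat q -> p = q.
Proof. intros H. rewrite <- (cancel_of_to p), <- (cancel_of_to q), H. reflexivity. Qed.

Lemma pform_code_inj A B : pform_code A = pform_code B -> A = B.
Proof.
  revert B; induction A; destruct B; intros H; cbn [pform_code] in H;
    apply to_nat_inj in H; try discriminate; try reflexivity.
  all: apply (f_equal snd) in H; cbn [snd] in H; try (subst; reflexivity).
  all: apply to_nat_inj in H; f_equal; [apply IHA1, (f_equal fst H)| apply IHA2, (f_equal snd H)].
Qed.

Section Lindenbaum.
Variable Der : list pform -> pform -> Prop.
Hypothesis HD : consequence Der.

Definition entails (X : pform -> Prop) (A : pform) : Prop :=
  exists G, (forall B, In B G -> X B) /\ Der G A.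

Definition extend (X : pform -> Prop) (A : pform) (B : pform) : Prop := X B \/ B = A.

Lemma entails_mono X X' A : (forall B, X B -> X' B) -> entails X A -> entails X' A.
Proof. intros H [G [HG HA]]. exists G. split; auto. Qed.

Lemma extend_list X A G :
  (forall B, In B G -> extend X A B) -> exists G', (forall B, In B G' -> X B) /\ incl G (A :: G').
Proof.
  induction G as [|B G IH]; intros H.
  - exists []. split; intros _ [].
  - destruct IH as [G' [HG' Hi]]; [intros C HC; apply H, in_cons, HC|].
    destruct (H B (in_eq _ _)) as [HB| ->].
    + exists (B :: G'). split; [intros C [<-|HC]; auto|].
      intros C [<-|HC]; [right; left; reflexivity|].
      destruct (Hi C HC) as [<-|HC']; [left; reflexivity| right; right; exact HC'].
    + exists G'. split; [exact HG'| exact (incl_cons (in_eq _ _) Hi)].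
Qed.

Lemma entails_cut X A B : entails X A -> entails (extend X A) B -> entails X B.
Proof.
  intros [G1 [H1 D1]] [G2 [H2 D2]].
  destruct (extend_list X A G2 H2) as [G [HG Hi]].
  exists (G ++ G1). split; [intros C HC; apply in_app_iff in HC as [HC|HC]; auto|].
  apply (cons_cut _ HD _ A).
  - apply (cons_mono _ HD G1); [exact D1| apply incl_appr, incl_refl].
  - apply (cons_mono _ HD G2); [exact D2|].
    apply (incl_tran Hi), incl_cons; [apply in_eq| apply incl_tl, incl_appl, incl_refl].
Qed.

Lemma entails_or X A A' B :
  entails (extend X A) B -> entails (extend X A') B -> entails (extend X (POr A A')) B.
Proof.
  intros [G1 [H1 D1]] [G2 [H2 D2]].
  destruct (extend_list X A G1 H1) as [G1' [HG1 Hi1]].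
  destruct (extend_list X A' G2 H2) as [G2' [HG2 Hi2]].
  exists (POr A A' :: G1' ++ G2'). split.
  - intros C [<-|HC]; [right; reflexivity| left; apply in_app_iff in HC as [HC|HC]; auto].
  - apply (cons_or _ HD).
    + apply (cons_mono _ HD G1); [exact D1|].
      apply (incl_tran Hi1), incl_cons; [apply in_eq| apply incl_tl, incl_appl, incl_refl].
    + apply (cons_mono _ HD G2); [exact D2|].
      apply (incl_tran Hi2), incl_cons; [apply in_eq| apply incl_tl, incl_appr, incl_refl].
Qed.

Fixpoint stage (X : pform -> Prop) (B : pform) (n : nat) : pform -> Prop :=
  match n with
  | 0 => X
  | S n => fun A => stage X B n A \/ (pform_code A = n /\ ~ entails (extend (stage X B n) A) B)
  end.

Lemma stage_mono X B n m A : n <= m -> stage X B n A -> stage X B m A.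
Proof. induction 1; simpl; auto. Qed.

Lemma stage_finite X B G :
  (forall A, In A G -> exists n, stage X B n A) -> exists n, forall A, In A G -> stage X B n A.
Proof.
  induction G as [|C G IH]; intros H; [exists 0; intros _ []|].
  destruct (H C (in_eq _ _)) as [n Hn].
  destruct IH as [m Hm]; [intros A HA; apply H, in_cons, HA|].
  exists (Nat.max n m). intros A [<-|HA].
  - apply (stage_mono X B n); [lia| exact Hn].
  - apply (stage_mono X B m); [lia| apply Hm, HA].
Qed.

Lemma stage_not_entails X B n : ~ entails X B -> ~ entails (stage X B n) B.
Proof.
  intros H0; induction n as [|n IH]; [exact H0|].
  intros [G [HG HB]].
  destruct (classic (exists A, In A G /\ pform_code A = n /\
     ~ entails (extend (stage X B n) A) B)) as [[A [HA [Hc Hn]]]|Hno].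
  - apply Hn. exists G. split; [|exact HB].
    intros C HC. destruct (HG C HC) as [Hs|[Hc' _]]; [left; exact Hs|].
    right. apply pform_code_inj. congruence.
  - apply IH. exists G. split; [|exact HB].
    intros C HC. destruct (HG C HC) as [Hs|[Hc' Hn']]; [exact Hs|].
    exfalso. apply Hno. exists C. auto.
Qed.

Lemma lindenbaum X B : ~ entails X B ->
  exists T : pform -> Prop, (forall A, X A -> T A) /\ ~ T B /\
    (forall G A, (forall C, In C G -> T C) -> Der G A -> T A) /\
    (forall A A', T (POr A A') -> T A \/ T A').
Proof.
  intros H0. set (T A := exists n, stage X B n A).
  assert (HT : ~ entails T B).
  { intros [G [HG HB]]. destruct (stage_finite X B G HG) as [n Hn].
    apply (stage_not_entails X B n H0). exists G. auto. }
  assert (Hmax : forall A, ~ T A -> entails (extend T A) B).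
  { intros A HA. apply NNPP. intros Hn. apply HA. exists (S (pform_code A)). right.
    split; [reflexivity|]. intros Hs. apply Hn. revert Hs. apply entails_mono.
    intros C [HC|HC]; [left; exists (pform_code A); exact HC| right; exact HC]. }
  assert (Hax : forall A, T A -> entails T A).
  { intros A HA. exists [A]. split; [intros C [<-|[]]; exact HA| apply (cons_ax _ HD), in_eq]. }
  exists T. split; [|split; [|split]].
  - intros A HA. exists 0. exact HA.
  - intros HB. exact (HT (Hax B HB)).
  - intros G A HG HA. apply NNPP. intros Hn. apply HT.
    apply (entails_cut T A); [exists G; auto| apply Hmax, Hn].
  - intros A A' HA. apply NNPP. intros Hn. apply HT.
    apply (entails_cut T (POr A A')); [apply Hax, HA|].
    apply entails_or; apply Hmax; intros H; apply Hn; auto.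
Qed.

End Lindenbaum.

Ltac nd_assumption := apply nd_ax; simpl; auto.

Section CanonicalModel.
Variable L : ndlogic.

Definition nd_closed (T : pform -> Prop) : Prop :=
  forall G A, (forall B, In B G -> T B) -> nd L G A -> T A.

Lemma nd_closed_0 T A : nd_closed T -> nd L [] A -> T A.
Proof. intros HT H. exact (HT [] A (fun _ H => match H with end) H). Qed.

Lemma nd_closed_1 T A B : nd_closed T -> T A -> nd L [A] B -> T B.
Proof. intros HT HA H. apply (HT [A] B); [intros C [<-|[]]; exact HA| exact H]. Qed.

Lemma nd_closed_2 T A B C : nd_closed T -> T A -> T B -> nd L [A; B] C -> T C.
Proof. intros HT HA HB H. apply (HT [A; B] C); [intros D [<-|[<-|[]]]; assumption| exact H]. Qed.

(* Prime theories closed under [imp_der T] are [can_rel]-successors of [T]. *)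
Definition imp_der (T : pform -> Prop) (G : list pform) (A : pform) : Prop :=
  T (PImp (pconj G) A).

Lemma consequence_imp_der T : nd_closed T -> consequence (imp_der T).
Proof.
  intros HT. unfold imp_der. split.
  - intros G G' A H Hi. apply (nd_closed_2 T _ (PImp (pconj G') (pconj G)) _ HT H).
    + apply (nd_closed_0 T _ HT), nd_impI, nd_pconj_intro. intros B HB.
      apply (nd_pconj_elim _ _ G'); [nd_assumption| apply Hi, HB].
    + apply (nd_trf (B := pconj G)); nd_assumption.
  - intros G A H. apply (nd_closed_0 T _ HT), nd_imp_pconj, nd_ax, H.
  - intros G A B H1 H2. simpl in H2. apply (nd_closed_2 T _ _ _ HT H1 H2).
    apply (nd_trf (B := PAnd A (pconj G))); [|nd_assumption].
    apply nd_andIf; [nd_assumption| apply nd_impI; nd_assumption].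
  - intros G A A' B H1 H2. simpl in *. apply (nd_closed_2 T _ _ _ HT H1 H2).
    apply (nd_trf (B := POr (PAnd A (pconj G)) (PAnd A' (pconj G)))); [|apply nd_orEf; nd_assumption].
    apply nd_impI, (nd_orE (A := A) (B := A')); [eapply nd_andE0; nd_assumption| |].
    + apply nd_orI0, nd_andI; [nd_assumption| eapply nd_andE1; nd_assumption].
    + apply nd_orI1, nd_andI; [nd_assumption| eapply nd_andE1; nd_assumption].
Qed.

Record prime_theory := PrimeTheory {
  th :> pform -> Prop;
  th_closed : nd_closed th;
  th_prime : forall A B, th (POr A B) -> th A \/ th B;
  th_consistent : ~ th PBot
}.

Lemma prime_theory_ext (D T : prime_theory) : (forall A, D A <-> T A) -> D = T.
Proof.
  destruct D as [D HD PD CD], T as [T HT PT CT]; simpl. intros H.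
  assert (D = T) as <- by (extensionality A; apply propositional_extensionality, H).
  f_equal; apply proof_irrelevance.
Qed.

Lemma th_top (D : prime_theory) : D PTop.
Proof. apply (nd_closed_0 _ _ (th_closed D)), nd_top. Qed.

Definition can_rel (D T : prime_theory) : Prop := forall A B, D (PImp A B) -> T A -> T B.

(* Under Cur every successor contains its predecessor and [can_rel] is transitive, so
   its reflexive closure is an order along which [can_rel] is monotone, as frame
   condition P requires; without Cur the order is discrete. *)
Definition can_le (D T : prime_theory) : Prop := D = T \/ (ruleCur L = true /\ can_rel D T).

Section Cur.
Hypothesis HC : ruleCur L = true.

Lemma can_rel_incl D T A : can_rel D T -> D A -> T A.
Proof.
  intros H HA. apply (H PTop A); [|apply th_top].
  apply (nd_closed_1 _ _ _ (th_closed D) HA), nd_Cur; [exact HC| nd_assumption].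
Qed.

Lemma can_rel_trans D T U : can_rel D T -> can_rel T U -> can_rel D U.
Proof. intros H1 H2 A B HAB. apply H2, (can_rel_incl D T _ H1 HAB). Qed.

End Cur.

Lemma can_le_trans D T U : can_le D T -> can_le T U -> can_le D U.
Proof.
  intros [<-|[HC H1]] H2; [exact H2|].
  destruct H2 as [<-|[_ H2]]; right; split; auto.
  exact (can_rel_trans HC _ _ _ H1 H2).
Qed.

Lemma can_le_antisym D T : can_le D T -> can_le T D -> D = T.
Proof.
  intros [->|[HC H1]] [E|[_ H2]]; auto.
  apply prime_theory_ext. intros A; split; [apply (can_rel_incl HC _ _ _ H1)| apply (can_rel_incl HC _ _ _ H2)].
Qed.

Lemma can_rel_mono D T D' T' : can_rel D T -> can_le D' D -> can_le T T' -> can_rel D' T'.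
Proof.
  intros H [<-|[HC H1]] [<-|[HC' H2]]; eauto using can_rel_trans.
Qed.

Lemma can_val_up n D T : can_le D T -> D (PVar n) -> T (PVar n).
Proof. intros [<-|[HC H]]; [auto| apply (can_rel_incl HC _ _ _ H)]. Qed.

Definition canonical_model : kmodel :=
  @KModel prime_theory can_le (fun D => or_introl eq_refl) can_le_trans can_le_antisym
    can_rel can_rel_mono (fun n D => D (PVar n)) can_val_up.

Lemma prime_extension X A : ~ entails (nd L) X A ->
  exists T : prime_theory, (forall B, X B -> T B) /\ ~ T A.
Proof.
  intros H. destruct (lindenbaum _ (consequence_nd L) X A H) as [T [HX [HA [Hcl Hpr]]]].
  assert (Hcons : ~ T PBot).
  { intros Hb. apply HA, (Hcl [PBot]); [intros B [<-|[]]; exact Hb| apply nd_bot; nd_assumption]. }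
  exists (PrimeTheory T Hcl Hpr Hcons). auto.
Qed.

Lemma exists_successor (D : prime_theory) A B : ~ D (PImp A B) ->
  exists T : prime_theory, can_rel D T /\ T A /\ ~ T B.
Proof.
  intros Hn. pose proof (th_closed D) as HD.
  destruct (lindenbaum _ (consequence_imp_der _ HD) (fun C => C = A) B) as [T [HX [HB [Hcl Hpr]]]].
  - intros [G [HG HGB]]. apply Hn. apply (nd_closed_1 _ _ _ HD HGB).
    apply (nd_trf (B := pconj G)); [|nd_assumption].
    apply nd_impI, nd_pconj_intro. intros C HC. rewrite (HG C HC). nd_assumption.
  - assert (HT : nd_closed T).
    { intros G C HG HC. apply (Hcl G C HG), (nd_closed_0 _ _ HD), nd_imp_pconj, HC. }
    assert (Hcons : ~ T PBot).
    { intros Hb. apply HB, (HT [PBot]); [intros C [<-|[]]; exact Hb| apply nd_bot; nd_assumption]. }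
    exists (PrimeTheory T HT Hpr Hcons). simpl. split; [|split; [apply HX; reflexivity| exact HB]].
    intros C E HCE HC. apply (Hcl [C] E); [intros F [<-|[]]; exact HC|].
    apply (nd_closed_1 _ _ _ HD HCE). apply (nd_trf (B := C)); [|nd_assumption].
    apply nd_impI. eapply nd_andE0; nd_assumption.
Qed.

Lemma canonical_truth A (D : prime_theory) : forces canonical_model D (emb A) <-> D A.
Proof.
  revert D; induction A; intros D; pose proof (th_closed D) as HD; simpl.
  - reflexivity.
  - split; [intros _; apply th_top| auto].
  - split; [intros []| apply th_consistent].
  - rewrite IHA1, IHA2. split.
    + intros [H1 H2]. apply (nd_closed_2 _ _ _ _ HD H1 H2), nd_andI; nd_assumption.
    + intros H. split; apply (nd_closed_1 _ _ _ HD H); [eapply nd_andE0| eapply nd_andE1]; nd_assumption.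
  - rewrite IHA1, IHA2. split; [|apply th_prime].
    intros [H|H]; apply (nd_closed_1 _ _ _ HD H); [apply nd_orI0| apply nd_orI1]; nd_assumption.
  - split.
    + intros H. apply NNPP. intros Hn. destruct (exists_successor D A1 A2 Hn) as [T [HR [HA HB]]].
      apply HB, IHA2, H; [exact HR| apply IHA1, HA].
    + intros H T HR HA. apply IHA2, (HR A1 A2 H), IHA1, HA.
Qed.

Section Completeness.
Variable R : schemes.
Hypotheses (HE : haswF R = true -> ruleE L = true) (HM : hasF R = true -> ruleMP L = true)
  (HC : hasP R = true -> ruleCur L = true).

Lemma canonical_model_in_K : in_K R canonical_model.
Proof.
  split; [|split]; simpl.
  - intros HP D T HR. right. split; [apply HC, HP| exact HR].
  - intros HF D A B HAB HA. apply (nd_closed_2 _ _ _ _ (th_closed D) HAB HA).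
    apply (nd_MP (A := A)); [apply HM, HF| nd_assumption| nd_assumption].
  - intros HW D. assert (Hn : ~ D (PImp PTop PBot)).
    { intros H. apply (th_consistent D), (nd_closed_1 _ _ _ (th_closed D) H).
      apply nd_E; [apply HE, HW| nd_assumption]. }
    destruct (exists_successor D PTop PBot Hn) as [T [HR _]]. exists T. exact HR.
Qed.

Lemma nd_complete G A : K_valid R (map emb G) (emb A) -> nd L G A.
Proof.
  intros HK. apply NNPP. intros Hn.
  destruct (prime_extension (fun B => In B G) A) as [T [HG HA]].
  - intros [G' [HG' H]]. exact (Hn (nd_weaken _ _ _ _ H HG')).
  - apply HA, canonical_truth, (HK _ canonical_model_in_K).
    intros B HB. apply in_map_iff in HB as [C [<- HCG]]. apply canonical_truth, HG, HCG.
Qed.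

End Completeness.

End CanonicalModel.

Lemma four_equiv_of_matching L R :
  ruleE L = haswF R -> ruleMP L = hasF R -> ruleCur L = hasP R ->
  forall G A, four_equiv L R G A.
Proof.
  intros HE HM HC G A.
  assert (to_stl : nd L G A -> stl R (map emb G) (emb A)) by (apply stl_of_nd; congruence).
  assert (to_nd : K_valid R (map emb G) (emb A) -> nd L G A) by (apply nd_complete; congruence).
  pose proof (stl_sound R (map emb G) (emb A)) as to_iST.
  pose proof (iST_valid_K_valid R (map emb G) (emb A)) as to_K.
  repeat split; auto.
Qed.

Theorem theorem9p4 : forall (G : list pform) (A : pform),
  four_equiv KPC  R_none G A /\
  four_equiv EKPC R_wF   G A /\
  four_equiv KTPC R_F    G A /\
  four_equiv BPC  R_P    G A /\
  four_equiv EBPC R_PwF  G A /\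
  four_equiv IPC  R_PF   G A.
Proof.
  intros G A.
  repeat match goal with |- _ /\ _ => split end; apply four_equiv_of_matching; reflexivity.
Qed.
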